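(* Let $m,n\in\mathbb N$ with $m\ge 5$, $n\ge 8$, $n>m$, and let $j\in\{1,2\}$. Then $r(K_{1,m-1},T_n^j)\in\{m+n-4,\ m+n-5\}$. Moreover, if $mn$ is even, then $r(K_{1,m-1},T_n^j)=m+n-4$.
   Context: All graphs are finite and simple; a graph ''contains'' $H$ if it has a subgraph isomorphic to $H$. $K_{1,m-1}$ is the star on $m$ vertices. For graphs $G_1,G_2$, the Ramsey number $r(G_1,G_2)$ is the smallest positive integer $N$ such that for every graph $G$ on $N$ vertices, either $G$ contains a copy of $G_1$ or the complement $\overline G$ contains a copy of $G_2$. For $n\ge 5$, $T_n^1$ is the tree with vertex set $\{v_0,\ldots,v_{n-1}\}$ and edges $v_0v_1,\ldots,v_0v_{n-3},v_{n-4}v_{n-2},v_{n-3}v_{n-1}$, and $T_n^2$ is the tree on the same vertex set with edges $v_0v_1,\ldots,v_0v_{n-3},v_{n-3}v_{n-2},v_{n-3}v_{n-1}$. *)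

From mathcomp Require Import all_boot.
Set Implicit Arguments. Unset Strict Implicit. Unset Printing Implicit Defensive.

Definition simple_graph (N : nat) (G : rel 'I_N) : Prop :=
  (forall x, ~~ G x x) /\ (forall x y, G x y = G y x).

Definition compl_graph (N : nat) (G : rel 'I_N) : rel 'I_N :=
  fun x y => (x != y) && ~~ G x y.

Definition contains (k N : nat) (H : rel 'I_k) (G : rel 'I_N) : Prop :=
  exists f : 'I_k -> 'I_N, injective f /\ (forall i j, H i j -> G (f i) (f j)).

Definition ramsey_prop (k1 k2 : nat) (G1 : rel 'I_k1) (G2 : rel 'I_k2) (N : nat) : Prop :=
  forall G : rel 'I_N, simple_graph G ->
    contains G1 G \/ contains G2 (compl_graph G).

Definition is_ramsey_number (k1 k2 : nat) (G1 : rel 'I_k1) (G2 : rel 'I_k2) (N : nat) : Prop :=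
  0 < N /\ ramsey_prop G1 G2 N /\ (forall M, 0 < M -> M < N -> ~ ramsey_prop G1 G2 M).

Definition symc (k : nat) (e : nat -> nat -> bool) : rel 'I_k :=
  fun x y => e (val x) (val y) || e (val y) (val x).

Definition star (m : nat) : rel 'I_m :=
  @symc m (fun a b => (a == 0) && (b != 0)).

(* T_n^1: edges v0v1..v0v_{n-3}, v_{n-4}v_{n-2}, v_{n-3}v_{n-1} *)
Definition tree1 (n : nat) : rel 'I_n :=
  @symc n (fun a b => [|| (a == 0) && (1 <= b <= n - 3),
                         (a == n - 4) && (b == n - 2) |
                         (a == n - 3) && (b == n - 1)]).

(* T_n^2: edges v0v1..v0v_{n-3}, v_{n-3}v_{n-2}, v_{n-3}v_{n-1} *)
Definition tree2 (n : nat) : rel 'I_n :=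
  @symc n (fun a b => [|| (a == 0) && (1 <= b <= n - 3),
                         (a == n - 3) && (b == n - 2) |
                         (a == n - 3) && (b == n - 1)]).

Definition treej (j n : nat) : rel 'I_n := if j == 1 then @tree1 n else @tree2 n.
Arguments star m : clear implicits.
Arguments tree1 n : clear implicits.
Arguments tree2 n : clear implicits.
Arguments treej j n : clear implicits.

From mathcomp Require Import all_boot zify.
From Stdlib Require Import Classical.

Set Implicit Arguments. Unset Strict Implicit. Unset Printing Implicit Defensive.

(* Both trees consist of a centre v0 with n - 3 neighbours, two of which carry
   the two remaining vertices (one pendant vertex each for T_n^1, both on the
   same neighbour for T_n^2).

   Upper bound r <= m + n - 4.  A graph on m + n - 4 vertices without K_{1,m-1}
   has maximum degree at most m - 2, so its complement H has minimum degree at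
   least n - 3.  The trees are embedded in H by cases on the maximum degree of
   H: a vertex of degree at least n - 1, or exactly n - 2, serves as the
   centre directly; if H is (n - 3)-regular, fix v0 and split the remaining
   vertices into its neighbourhood A and the rest O: two disjoint A-O edges
   give T_n^1, and double counting the A-O edges gives T_n^2.

   A graph of maximum degree at most m - 2 whose complement has
   maximum degree at most n - 4 witnesses the failure of the Ramsey property,
   since the star and the trees have a vertex of degree m - 1, resp. n - 3.
   Circulant "band" graphs provide such witnesses on m + n - 6 vertices, and on
   m + n - 5 vertices when mn is even.  The Ramsey property being monotone in
   the number of vertices, the theorem follows. *)

Definition nbhd (T : finType) (G : rel T) (x : T) : {set T} := [set y | G x y].

Lemma in_nbhd (T : finType) (G : rel T) x y : (y \in nbhd G x) = G x y.
Proof. by rewrite inE. Qed.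

Lemma pick_avoiding (T : finType) (A : {set T}) (s : seq T) d :
  d <= #|A| -> size s < d -> exists2 x, x \in A & x \notin s.
Proof.
move=> dA /leq_trans/(_ dA) small.
case: (boolP [exists x in A, x \notin s]) => [/exists_inP // | /exists_inPn As].
have /subset_leq_card : A \subset s by apply/subsetP => x /As/negbNE.
by move/leq_trans/(_ (card_size s)); rewrite leqNgt small.
Qed.

Arguments pick_avoiding {T A} s {d}.

Lemma card_setD2 (T : finType) (A : {set T}) (x y : T) k :
  k + (x \in A) + (y \in A) <= #|A| -> k <= #|A :\: [set x; y]|.
Proof.
have : #|A :&: [set x; y]| <= (x \in A) + (y \in A).
  have sub : A :&: [set x; y] \subset [seq z <- [:: x; y] | z \in A].
    by apply/subsetP => z; rewrite !inE mem_filter !inE andbC.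
  apply: leq_trans (subset_leq_card sub) _; apply: leq_trans (card_size _) _.
  by rewrite size_filter /= addn0.
by rewrite cardsD; have := subset_leq_card (subsetIl A [set x; y]); lia.
Qed.

Lemma card_le_size (T : finType) (A : {pred T}) (f : T -> nat) (s : seq nat) :
  {in A &, injective f} -> (forall x, x \in A -> f x \in s) -> #|A| <= size s.
Proof.
move=> finj fA; rewrite cardE -(size_map f); apply: uniq_leq_size.
  by rewrite map_inj_in_uniq ?enum_uniq // => x y; rewrite !mem_enum; exact: finj.
by move=> y /mapP[x]; rewrite mem_enum => /fA fxs ->.
Qed.

Lemma sub_seq_of_card (T : finType) (A : {set T}) d :
  d <= #|A| -> exists t : seq T, [/\ size t = d, uniq t & {subset t <= A}].
Proof.
move=> dA; exists (take d (enum A)); split.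
- by rewrite size_take -cardE; case: ltnP => //; lia.
- exact/take_uniq/enum_uniq.
- by move=> z /mem_take; rewrite mem_enum.
Qed.

Lemma edge_neq N (G : rel 'I_N) x y : simple_graph G -> G x y -> x != y.
Proof. by case=> irr _ Gxy; apply: contraTneq Gxy => ->; rewrite irr. Qed.

Lemma compl_simple N (G : rel 'I_N) : simple_graph G -> simple_graph (compl_graph G).
Proof. by move=> [irr Gsym]; split=> [x | x y]; rewrite /compl_graph ?eqxx // eq_sym Gsym. Qed.

Lemma nbhd_compl_compl N (G : rel 'I_N) x :
  simple_graph G -> nbhd (compl_graph (compl_graph G)) x = nbhd G x.
Proof.
move=> [irr _]; apply/setP => y; rewrite !in_nbhd /compl_graph.
by case: eqVneq => [<- | _] /=; rewrite ?negbK // (negbTE (irr x)).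
Qed.

Lemma compl_degree N (G : rel 'I_N) x :
  simple_graph G -> #|nbhd (compl_graph G) x| = N - 1 - #|nbhd G x|.
Proof.
move=> [irr _]; have -> : nbhd (compl_graph G) x = ~: (x |: nbhd G x).
  by apply/setP => y; rewrite !inE /compl_graph negb_or eq_sym.
by have := cardsC (x |: nbhd G x); rewrite cardsU1 in_nbhd irr card_ord /=; lia.
Qed.

Lemma contains_symc k N (e : nat -> nat -> bool) (G : rel 'I_N) (L : seq 'I_N) (x0 : 'I_N) :
  (forall x y, G x y = G y x) -> size L = k -> uniq L ->
  (forall i j, i < k -> j < k -> e i j -> G (nth x0 L i) (nth x0 L j)) ->
  contains (@symc k e) G.
Proof.
move=> Gsym sizeL uniqL edges; exists (fun i : 'I_k => nth x0 L i); split.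
  by move=> i i' /eqP; rewrite nth_uniq ?sizeL // => /eqP/val_inj.
by move=> i i' /orP[] hi; [|rewrite Gsym]; apply: edges.
Qed.

Lemma contains_map k N N' (P : rel 'I_k) (H : rel 'I_N) (G : rel 'I_N') (w : 'I_N -> 'I_N') :
  injective w -> (forall x y, H x y -> G (w x) (w y)) -> contains P H -> contains P G.
Proof.
move=> winj wH [f [finj fP]]; exists (w \o f); split; first exact: inj_comp.
by move=> i i' /fP /wH.
Qed.

(* A copy of P in G maps the neighbourhood of c injectively into a neighbourhood. *)
Lemma degree_of_contains k N (P : rel 'I_k) (G : rel 'I_N) (c : 'I_k) :
  contains P G -> exists x, #|nbhd P c| <= #|nbhd G x|.
Proof.
move=> [f [finj fP]]; exists (f c).
rewrite -(card_imset _ finj); apply/subset_leq_card/subsetP => _ /imsetP[i + ->].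
by rewrite !in_nbhd => /fP.
Qed.

Lemma centre_degree k (P : rel 'I_k) (c : 'I_k) (s : seq nat) :
  (forall i : 'I_k, val i \notin s -> P c i) -> k - size s <= #|nbhd P c|.
Proof.
move=> hP; have : #|~: nbhd P c| <= size s.
  apply: (@card_le_size _ _ val) => [i i' _ _ /val_inj // | i]; rewrite !inE.
  by apply: contraR => /hP.
by have := cardsC (nbhd P c); rewrite card_ord; lia.
Qed.

Lemma star_of_degree m N (G : rel 'I_N) x :
  simple_graph G -> m - 1 <= #|nbhd G x| -> contains (star m) G.
Proof.
move=> [irr Gsym] /sub_seq_of_card [t [sz ut tN]].
case: m sz => [|m] sz.
  by exists (fun i : 'I_0 => x); split => [[]|[]].
apply: (@contains_symc _ _ _ G (x :: t) x Gsym); first by rewrite /= sz subn1.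
  by rewrite /= ut andbT; apply: contraNN (irr x) => /tN; rewrite in_nbhd.
move=> [|i] [|j] //= _ jm _; rewrite -in_nbhd; apply/tN/mem_nth; rewrite sz; lia.
Qed.

Lemma star_centre_degree m (c : 'I_m) : val c = 0 -> m - 1 <= #|nbhd (star m) c|.
Proof.
by move=> c0; apply: (centre_degree (s := [:: 0])) => i; rewrite inE /star /symc c0 /= => ->.
Qed.

Lemma tree_centre_degree j n (c : 'I_n) : val c = 0 -> n - 3 <= #|nbhd (treej j n) c|.
Proof.
move=> c0; apply: (centre_degree (s := [:: 0; n - 2; n - 1])) => i; rewrite !inE /= => hi.
have := ltn_ord i; rewrite /treej; case: ifP => _ lt;
  rewrite /tree1 /tree2 /symc c0 eqxx /=; apply/orP; left; apply/orP; left; lia.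
Qed.

Lemma uniq_insert (T : eqType) (v : T) (t w : seq T) :
  uniq t -> uniq (v :: w) -> (forall z, z \in t -> z \notin v :: w) -> uniq (v :: t ++ w).
Proof.
move=> ut uw tw; have -> : uniq (v :: t ++ w) = uniq (t ++ v :: w).
  by apply: perm_uniq; rewrite -cat1s perm_catCA.
by rewrite cat_uniq ut uw has_sym andbT; apply/hasPn.
Qed.

Lemma tree_embedding n N (H : rel 'I_N) (v0 a b x y : 'I_N) :
  5 <= n -> simple_graph H -> H v0 a -> H v0 b -> uniq [:: v0; a; b; x; y] ->
  n - 3 <= #|nbhd H v0 :\: [set x; y]| ->
  (H a x -> H b y -> contains (tree1 n) H) /\ (H b x -> H b y -> contains (tree2 n) H).
Proof.
move=> n5 [irr Hsym] va vb uq cnt.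
set S := nbhd H v0 :\: [set x; y] :\: [set a; b].
have cS : n - 5 <= #|S|.
  apply: card_setD2; apply: (leq_trans _ cnt).
  have := leq_b1 (a \in nbhd H v0 :\: [set x; y]).
  by have := leq_b1 (b \in nbhd H v0 :\: [set x; y]); lia.
have [t [st ut tS]] := sub_seq_of_card cS.
have tN : {subset t <= nbhd H v0} by move=> z /tS; rewrite !inE => /andP[_ /andP[_ ->]].
set L := v0 :: t ++ [:: a; b; x; y].
have sL : size L = n by rewrite /= size_cat st /=; lia.
have uL : uniq L.
  apply: uniq_insert => // z /tS; rewrite !inE => /andP[/norP[za zb] /andP[/norP[zx zy] vz]].
  rewrite (negbTE za) (negbTE zb) (negbTE zx) (negbTE zy) !orbF.
  by apply: contraTneq vz => ->; rewrite irr.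
have nthL i : nth v0 L (n - 4 + i) = nth v0 [:: a; b; x; y] i.
  by rewrite (_ : n - 4 + i = (size t + i).+1) /= ?nth_cat ?ltnNge ?leq_addr ?addKn // st; lia.
have La : nth v0 L (n - 4) = a by rewrite -[n - 4]addn0 nthL.
have Lb : nth v0 L (n - 3) = b by rewrite (_ : n - 3 = n - 4 + 1) ?nthL //; lia.
have Lx : nth v0 L (n - 2) = x by rewrite (_ : n - 2 = n - 4 + 2) ?nthL //; lia.
have Ly : nth v0 L (n - 1) = y by rewrite (_ : n - 1 = n - 4 + 3) ?nthL //; lia.
have Lcentre i : 0 < i <= n - 3 -> H v0 (nth v0 L i).
  move=> /andP[i0 i_le]; case: (ltnP (n - 5) i) => [i_gt | i_le'].
    have [-> | ->] : i = n - 4 \/ i = n - 3 by lia.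
      by rewrite La.
    by rewrite Lb.
  rewrite -(prednK i0) /= nth_cat st ifT; last by lia.
  by rewrite -in_nbhd; apply/tN/mem_nth; rewrite st; lia.
split=> [ax bY | bx bY]; apply: (contains_symc Hsym sL uL)
  => i j _ _ /or3P[] /andP[/eqP -> hj].
- exact: Lcentre.
- by rewrite (eqP hj) La Lx.
- by rewrite (eqP hj) Lb Ly.
- exact: Lcentre.
- by rewrite (eqP hj) Lb Lx.
- by rewrite (eqP hj) Lb Ly.
Qed.

(* For T_n^2 the second neighbour a of the centre can be chosen by counting. *)
Lemma tree2_embedding n N (H : rel 'I_N) (v0 b x y : 'I_N) :
  5 <= n -> simple_graph H -> H v0 b -> H b x -> H b y -> uniq [:: v0; b; x; y] ->
  n - 3 <= #|nbhd H v0 :\: [set x; y]| -> contains (tree2 n) H.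
Proof.
move=> n5 sH vb bx bY uq cnt.
have [a] := pick_avoiding [:: b] cnt ltac:(simpl; lia).
rewrite !inE => /andP[/norP[ax ay] va] ab.
apply: (tree_embedding n5 sH va vb _ cnt).2 => //.
by move: uq; rewrite /= !inE (negbTE (edge_neq sH va)) (negbTE ab) (negbTE ax) (negbTE ay).
Qed.

Ltac distinct := rewrite /= !inE !negb_or ?andbT; repeat (apply/andP; split); by [|rewrite eq_sym].

Lemma tree2_of_private n N (H : rel 'I_N) (v u : 'I_N) :
  5 <= n -> simple_graph H -> H v u -> n - 3 <= #|nbhd H v| ->
  1 < #|nbhd H u :\: (v |: nbhd H v)| -> contains (tree2 n) H.
Proof.
move=> n5 sH vu deg two.
have [w1 + _] := pick_avoiding [::] two isT.
have [w2 + w21] := pick_avoiding [:: w1] two isT.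
rewrite !inE in w21 * => /andP[/norP[w2v w2N] uw2] /andP[/norP[w1v w1N] uw1].
apply: (tree2_embedding n5 sH vu uw1 uw2).
  have uv := edge_neq sH vu; have u1 := edge_neq sH uw1; have u2 := edge_neq sH uw2.
  distinct.
by apply: card_setD2; rewrite !in_nbhd (negbTE w1N) (negbTE w2N) !addn0.
Qed.

Lemma trees_at_high_degree n N (H : rel 'I_N) (v0 : 'I_N) :
  7 <= n -> simple_graph H -> (forall x, n - 3 <= #|nbhd H x|) -> n - 1 <= #|nbhd H v0| ->
  contains (tree1 n) H /\ contains (tree2 n) H.
Proof.
move=> n7 sH deg big.
have [n5 n1 n3 n2 n3'] : [/\ 5 <= n, 0 < n - 1, 1 < n - 3, 2 < n - 1 & 3 < n - 3] by split; lia.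
have count_v0 w w' : n - 3 <= #|nbhd H v0 :\: [set w; w']|.
  apply: card_setD2; rewrite !in_nbhd; apply: (leq_trans _ big).
  by have := leq_b1 (H v0 w); have := leq_b1 (H v0 w'); lia.
have [u + _] := pick_avoiding [::] big n1; rewrite in_nbhd => vu.
have uv := edge_neq sH vu.
split.
- have [wa + /norP[wav _]] := pick_avoiding [:: v0] (deg u) n3.
  rewrite in_nbhd => uwa; have uwa' := edge_neq sH uwa.
  have [b + /norP[bu /norP[bwa _]]] := pick_avoiding [:: u; wa] big n2.
  rewrite in_nbhd => vb; have vb' := edge_neq sH vb.
  have [wb + /norP[wbv /norP[wbu /norP[wbwa _]]]] := pick_avoiding [:: v0; u; wa] (deg b) n3'.
  rewrite in_nbhd => bwb; have bwb' := edge_neq sH bwb.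
  apply: (tree_embedding n5 sH vu vb _ (count_v0 _ _)).1 uwa bwb.
  distinct.
- have [w1 + /norP[w1v _]] := pick_avoiding [:: v0] (deg u) n3.
  rewrite in_nbhd => uw1; have uw1' := edge_neq sH uw1.
  have [w2 + /norP[w2v /norP[w21 _]]] := pick_avoiding [:: v0; w1] (deg u) (ltnW n3').
  rewrite in_nbhd => uw2; have uw2' := edge_neq sH uw2.
  apply: (tree2_embedding n5 sH vu uw1 uw2 _ (count_v0 _ _)).
  distinct.
Qed.

(* A vertex v0 of degree exactly n - 2 is also a centre: some vertex o outside
   its closed neighbourhood has a neighbour u in it, the branching vertex. *)
Lemma trees_at_degree_n2 m n (H : rel 'I_(m + n - 4)) (v0 : 'I_(m + n - 4)) :
  5 <= m -> 7 <= n -> m < n -> simple_graph H -> (forall x, n - 3 <= #|nbhd H x|) ->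
  #|nbhd H v0| = n - 2 -> contains (tree1 n) H /\ contains (tree2 n) H.
Proof.
move=> m5 n7 mn sH deg dv.
have [n5 n1 n2 n3] : [/\ 5 <= n, 1 < n - 2, 2 < n - 3 & 3 < n - 3] by split; lia.
set C := v0 |: nbhd H v0.
have cardC : #|~: C| = m - 3.
  have := cardsC C; rewrite cardsU1 in_nbhd (negbTE (sH.1 v0)) dv card_ord; lia.
have C_small : size (enum C) < #|[set: 'I_(m + n - 4)]|.
  by rewrite -cardE cardsT; have := cardsC C; rewrite cardC card_ord; lia.
have [o _ oC] := pick_avoiding (enum C) (leqnn _) C_small.
move: oC; rewrite mem_enum !inE negb_or => /andP[ov ono].
have out_small : size (enum (~: C)) < n - 3 by rewrite -cardE cardC; lia.
have [u + uC] := pick_avoiding (enum (~: C)) (deg o) out_small.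
rewrite mem_enum !inE negbK in uC; rewrite in_nbhd => ou; have uo := edge_neq sH ou.
have vu : H v0 u.
  case/orP: uC => [/eqP eu | //]; move: ono; rewrite -eu.
  by rewrite (sH.2 u) ou.
have uv := edge_neq sH vu.
have count_v0 w : n - 3 <= #|nbhd H v0 :\: [set o; w]|.
  apply: card_setD2; rewrite !in_nbhd (negbTE ono) dv addn0.
  by have := leq_b1 (H v0 w); lia.
split.
- have [b + /norP[bu _]] := pick_avoiding [:: u] (deg v0) (ltnW n2).
  rewrite in_nbhd => vb; have vb' := edge_neq sH vb.
  have bo : b != o by apply: contraNneq ono => <-.
  have [wb + /norP[wbv /norP[wbu /norP[wbo _]]]] := pick_avoiding [:: v0; u; o] (deg b) n3.
  rewrite in_nbhd => bwb; have bwb' := edge_neq sH bwb.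
  apply: (tree_embedding n5 sH vu vb _ (count_v0 _)).1 _ bwb.
  + distinct.
  + by rewrite (sH.2 u).
- have [w + /norP[wv /norP[wo _]]] := pick_avoiding [:: v0; o] (deg u) n2.
  rewrite in_nbhd => uw; have uw' := edge_neq sH uw.
  apply: (tree2_embedding n5 sH vu _ uw _ (count_v0 _)).
  + by rewrite (sH.2 u).
  + distinct.
Qed.

Lemma two_matching (T : finType) (R : rel T) (A O : {set T}) :
  1 < #|O| -> (forall o, o \in O -> exists2 a, a \in A & R o a) ->
  (exists o1 o2 a1 a2,
     [/\ [/\ o1 \in O, o2 \in O, a1 \in A & a2 \in A], o1 != o2, a1 != a2, R o1 a1 & R o2 a2])
  \/ (exists2 a1, a1 \in A & forall o a, o \in O -> a \in A -> R o a -> a = a1).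
Proof.
move=> O2 hasA.
have [o1 o1O _] := pick_avoiding [::] O2 isT.
have [o2 o2O /norP[o21 _]] := pick_avoiding [:: o1] O2 isT.
have [a1 a1A o1a1] := hasA o1 o1O; have [a2 a2A o2a2] := hasA o2 o2O.
case: (eqVneq a2 a1) => [a21 | a21]; last first.
  by left; exists o1, o2, a1, a2; rewrite eq_sym (eq_sym a1).
case: (boolP [exists o in O, exists a in A, R o a && (a != a1)]); last first.
  move/exists_inPn => only; right; exists a1 => // o a oO aA oa.
  by apply/eqP; move: (only o oO) => /exists_inPn /(_ a aA); rewrite oa negbK.
case/exists_inP => o oO /exists_inP[a aA /andP[oa aa1]]; left.
case: (eqVneq o o1) => [oo1 | oo1].
  by exists o, o2, a, a1; rewrite oo1 eq_sym o21 aa1 -oo1 -a21.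
by exists o1, o, a1, a; rewrite eq_sym oo1 eq_sym aa1.
Qed.

Lemma double_count (T : finType) (R : rel T) (A B : {set T}) :
  (forall x y, R x y = R y x) ->
  \sum_(a in A) #|nbhd R a :&: B| = \sum_(b in B) #|nbhd R b :&: A|.
Proof.
move=> Rsym.
have edges x (C : {set T}) : #|nbhd R x :&: C| = \sum_(c in C) R x c.
  rewrite -sum1_card -big_mkcondr; apply: eq_bigl => y; by rewrite !inE andbC.
under eq_bigr do rewrite edges.
rewrite exchange_big; apply: eq_bigr => b _; rewrite edges.
by apply: eq_bigr => a _; rewrite Rsym.
Qed.

Section RegularCase.

Variables (m n : nat) (H : rel 'I_(m + n - 4)) (v0 : 'I_(m + n - 4)).
Hypotheses (m5 : 5 <= m) (n7 : 7 <= n) (mn : m < n) (sH : simple_graph H)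
  (regular : forall x, #|nbhd H x| = n - 3).

Let A := nbhd H v0.
Let O := ~: (v0 |: A).

Lemma in_O o : (o \in O) = (o != v0) && ~~ H v0 o.
Proof. by rewrite !inE negb_or. Qed.

Lemma card_O : #|O| = m - 2.
Proof.
have := cardsC (v0 |: A); rewrite cardsU1 in_nbhd (negbTE (sH.1 v0)) regular card_ord /=.
by rewrite /O; lia.
Qed.

Lemma A_O_neq a o : a \in A -> o \in O -> a != o.
Proof. by rewrite in_nbhd in_O => va /andP[_]; apply: contraNneq => <-. Qed.

Lemma count_A o o' : o \in O -> o' \in O -> n - 3 <= #|A :\: [set o; o']|.
Proof.
rewrite !in_O => /andP[_ vo] /andP[_ vo'].
by apply: card_setD2; rewrite /A !in_nbhd (negbTE vo) (negbTE vo') regular !addn0.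
Qed.

(* A vertex of O has at most m - 3 neighbours in O, hence n - m in A. *)
Lemma O_A_neighbours o : o \in O -> n - m <= #|nbhd H o :&: A|.
Proof.
move=> oO; have sub : nbhd H o \subset (O :\ o) :|: (nbhd H o :&: A).
  apply/subsetP => y; rewrite !inE => oy; rewrite oy /=.
  case: (H v0 y); rewrite ?orbT // !orbF eq_sym (edge_neq sH oy) /=.
  by apply: contraTneq oy => ->; rewrite (sH.2 o); move: oO; rewrite in_O => /andP[].
have := subset_leq_card sub; have := (leq_card_setU (O :\ o) (nbhd H o :&: A)).1.
have := cardsD1 o O; rewrite oO card_O regular /=; lia.
Qed.

(* Since n > m, every vertex of O has a neighbour in A. *)
Lemma O_has_A_neighbour o : o \in O -> exists2 a, a \in A & H o a.
Proof.
move=> oO; have [a + _] := pick_avoiding [::] (O_A_neighbours oO) ltac:(simpl; lia).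
by rewrite inE in_nbhd => /andP[oa aA]; exists a.
Qed.

(* Two disjoint A-O edges give T_n^1 centred at v0; otherwise all A-O edges
   end in a single vertex a1, whose degree would then exceed n - 3. *)
Lemma regular_tree1 : contains (tree1 n) H.
Proof.
have [n5 O2] : 5 <= n /\ 1 < #|O| by rewrite card_O; split; lia.
have [[o1 [o2 [a1 [a2 [[o1O o2O a1A a2A] o12 a12 o1a1 o2a2]]]]] | [a1 a1A only]] :=
  two_matching O2 O_has_A_neighbour.
- have va1 : H v0 a1 by rewrite -in_nbhd.
  have va2 : H v0 a2 by rewrite -in_nbhd.
  apply: (tree_embedding n5 sH va1 va2 _ (count_A o1O o2O)).1; rewrite ?(sH.2 a1) ?(sH.2 a2) //.
  have [v1 v2] := (edge_neq sH va1, edge_neq sH va2).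
  have [a1o1 a1o2] := (A_O_neq a1A o1O, A_O_neq a1A o2O).
  have [a2o1 a2o2] := (A_O_neq a2A o1O, A_O_neq a2A o2O).
  move: o1O o2O; rewrite !in_O => /andP[o1v _] /andP[o2v _].
  distinct.
- have [o oO _] := pick_avoiding [::] O2 isT.
  have one o' : o' \in O -> #|nbhd H o' :&: A| <= 1.
    move=> o'O; have sub : nbhd H o' :&: A \subset [set a1].
      apply/subsetP => a; rewrite !inE => /andP[o'a aA].
      by rewrite (only o' a o'O _ o'a) ?in_nbhd.
    by have := subset_leq_card sub; rewrite cards1.
  have star_a1 : v0 |: O \subset nbhd H a1.
    apply/subsetP => y; rewrite in_setU1 in_nbhd => /orP[/eqP -> | yO].
      by rewrite (sH.2 a1) -in_nbhd.
    have [a yA ya] := O_has_A_neighbour yO.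
    by rewrite (sH.2 a1) -(only y a yO yA ya).
  have := subset_leq_card star_a1; rewrite cardsU1 in_O eqxx card_O regular /=.
  by have := O_A_neighbours oO; have := one o oO; lia.
Qed.

(* If every neighbour of v0 has at most one neighbour in O, double counting
   the A-O edges forces m = n - 1 and a vertex o1 in O with a single neighbour a
   in A; then a has n - 4 neighbours outside the closed neighbourhood of o1. *)
Lemma sparse_tree2 :
  (forall u, u \in A -> #|nbhd H u :&: O| <= 1) -> contains (tree2 n) H.
Proof.
move=> sparse; have n5 : 5 <= n by lia.
have total : \sum_(o in O) #|nbhd H o :&: A| <= n - 3.
  rewrite -double_count; last exact: sH.2.
  by rewrite -(regular v0) -sum1_card; apply: leq_sum => u /sparse.
have lower c : (forall o, o \in O -> c <= #|nbhd H o :&: A|) -> (m - 2) * c <= n - 3.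
  by move=> hc; rewrite -card_O -sum_nat_const; apply: leq_trans total; exact: leq_sum.
have m_eq : m = n - 1 by have := lower _ O_A_neighbours; nia.
have [o1 o1O small] : exists2 o1, o1 \in O & #|nbhd H o1 :&: A| <= 1.
  case: (boolP [exists o in O, #|nbhd H o :&: A| <= 1]) => [/exists_inP // | /exists_inPn big].
  suff : (m - 2) * 2 <= n - 3 by lia.
  by apply: lower => o /big; rewrite -ltnNge.
have [a aA o1a] := O_has_A_neighbour o1O.
have va : H v0 a by rewrite -in_nbhd.
apply: (tree2_of_private n5 sH o1a); rewrite ?regular //.
have sub : nbhd H a :&: (o1 |: nbhd H o1) \subset [set o1].
  apply/subsetP => y; rewrite !inE => /andP[ay /predU1P[-> // | o1y]].
  case vy: (H v0 y).
    move/card_le1_eqP: small => /(_ y a); rewrite !inE o1y o1a vy va => /(_ isT isT) ay'.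
    by move: ay; rewrite ay' (negbTE (sH.1 y)).
  have yO : y \in O.
    rewrite in_O vy andbT; apply: contraTneq o1y => ->.
    by rewrite (sH.2 o1); move: o1O; rewrite in_O => /andP[].
  move/card_le1_eqP: (sparse a aA) => /(_ y o1).
  by rewrite !in_setI !in_nbhd ay yO (sH.2 a o1) o1a o1O => /(_ isT isT) ->.
rewrite cardsD regular; have := subset_leq_card sub; rewrite cards1; lia.
Qed.

(* T_n^2 comes from a neighbour of v0 with two neighbours in O, if any. *)
Lemma regular_tree2 : contains (tree2 n) H.
Proof.
case: (boolP [exists u in A, 1 < #|nbhd H u :&: O|]) => [/exists_inP[u uA two] | /exists_inPn few].
  have n5 : 5 <= n by lia.
  apply: (tree2_of_private n5 sH (v := v0) (u := u)); rewrite ?regular ?setDE //.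
  by rewrite -in_nbhd.
by apply: sparse_tree2 => u uA; rewrite leqNgt few.
Qed.

End RegularCase.

Lemma trees_of_min_degree m n (H : rel 'I_(m + n - 4)) :
  5 <= m -> 7 <= n -> m < n -> simple_graph H -> (forall x, n - 3 <= #|nbhd H x|) ->
  contains (tree1 n) H /\ contains (tree2 n) H.
Proof.
move=> m5 n7 mn sH deg.
case: (boolP [exists x, n - 1 <= #|nbhd H x|]) => [/existsP[v0 big] | /existsPn low].
  exact: trees_at_high_degree big.
case: (boolP [exists x, #|nbhd H x| == n - 2]) => [/existsP[v0 /eqP mid] | /existsPn nomid].
  exact: trees_at_degree_n2 mid.
have regular x : #|nbhd H x| = n - 3.
  by have := deg x; have := low x; have := nomid x; lia.
have v0 : 'I_(m + n - 4) by apply: (@Ordinal _ 0); lia.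
by split; [apply: (regular_tree1 v0) | apply: (regular_tree2 v0)].
Qed.

Lemma ramsey_upper m n j :
  5 <= m -> 7 <= n -> m < n -> ramsey_prop (star m) (treej j n) (m + n - 4).
Proof.
move=> m5 n7 mn G sG.
case: (boolP [exists x, m - 1 <= #|nbhd G x|]) => [/existsP[x hx] | /existsPn small].
  by left; apply: star_of_degree sG hx.
right; have deg x : n - 3 <= #|nbhd (compl_graph G) x|.
  by rewrite compl_degree //; have := small x; lia.
have [t1 t2] := trees_of_min_degree m5 n7 mn (compl_simple sG) deg.
by rewrite /treej; case: ifP.
Qed.

Lemma no_ramsey_of_degrees m n j M (G : rel 'I_M) :
  1 < m -> 3 < n -> simple_graph G ->
  (forall x, #|nbhd G x| <= m - 2) -> (forall x, #|nbhd (compl_graph G) x| <= n - 4) ->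
  ~ ramsey_prop (star m) (treej j n) M.
Proof.
move=> m2 n4 sG degG degGc /(_ G sG).
have m0 : 0 < m by lia.
have n0 : 0 < n by lia.
case=> [/(degree_of_contains (Ordinal m0)) | /(degree_of_contains (Ordinal n0))] [x].
  by have := @star_centre_degree m (Ordinal m0) erefl; have := degG x; lia.
by have := @tree_centre_degree j n (Ordinal n0) erefl; have := degGc x; lia.
Qed.

Definition cdist M (x y : 'I_M) : nat := if x <= y then y - x else y + M - x.

Definition band M k : rel 'I_M :=
  fun x y => (x != y) && ((cdist x y <= k) || (cdist y x <= k)).
Arguments band M k : clear implicits.

Lemma cdist_inj M (x : 'I_M) : injective (cdist x).
Proof.
move=> y z; have := ltn_ord x; have := ltn_ord y; have := ltn_ord z.
by rewrite /cdist; case: ifP; case: ifP => h1 h2 hz hy hx e; apply: ord_inj; lia.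
Qed.

Lemma cdist_sym M (x y : 'I_M) :
  x != y -> 0 < cdist x y < M /\ cdist y x = M - cdist x y.
Proof.
move=> /eqP ne; have {}ne : nat_of_ord x <> y by move/ord_inj.
have := ltn_ord x; have := ltn_ord y.
by rewrite /cdist; case: ifP; case: ifP => h1 h2 hy hx; split; lia.
Qed.

Lemma band_simple M k : simple_graph (band M k).
Proof. by split=> [x | x y]; rewrite /band ?eqxx // eq_sym orbC. Qed.

(* Neighbours of x lie at distance 1..k or M-k..M-1 from x. *)
Lemma band_degree M k (x : 'I_M) : #|nbhd (band M k) x| <= 2 * k.
Proof.
have -> : 2 * k = size (iota 1 k ++ iota (M - k) k) by rewrite size_cat !size_iota; lia.
apply: (card_le_size (f := cdist x)) => [y z _ _ /cdist_inj // | y].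
rewrite in_nbhd /band mem_cat !mem_iota => /andP[/cdist_sym [hxy hyx] hd].
by rewrite hyx in hd; lia.
Qed.

(* Non-neighbours of x lie at distance k+1..M-k-1 from x. *)
Lemma band_compl_degree M k (x : 'I_M) :
  #|nbhd (compl_graph (band M k)) x| <= M - 1 - 2 * k.
Proof.
rewrite -(size_iota k.+1 (M - 1 - 2 * k)).
apply: (card_le_size (f := cdist x)) => [y z _ _ /cdist_inj // | y].
rewrite in_nbhd /compl_graph /band mem_iota => /andP[ne]; rewrite ne /=.
by have [hxy hyx] := cdist_sym ne; rewrite hyx; lia.
Qed.

(* A graph on M <= a + b + 1 vertices with max degree <= a whose complement has
   max degree <= b, if a or b is even: a band graph or its complement. *)
Lemma split_graph M a b : M <= a + b + 1 -> ~~ odd a || ~~ odd b ->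
  exists G : rel 'I_M, [/\ simple_graph G, forall x, #|nbhd G x| <= a &
                          forall x, #|nbhd (compl_graph G) x| <= b].
Proof.
have half_even c : ~~ odd c -> 2 * (c %/ 2) = c.
  by move=> ev; have := divn_eq c 2; rewrite modn2 (negbTE ev); lia.
move=> Mab /orP[/half_even ea | /half_even eb].
- exists (band M (a %/ 2)); split=> [|x|x]; first exact: band_simple.
    by have := band_degree (a %/ 2) x; rewrite ea.
  by apply: leq_trans (band_compl_degree _ x) _; lia.
- exists (compl_graph (band M (b %/ 2))); split=> [|x|x].
  + exact/compl_simple/band_simple.
  + by apply: leq_trans (band_compl_degree _ x) _; lia.
  + rewrite nbhd_compl_compl; last exact: band_simple.
    by have := band_degree (b %/ 2) x; rewrite eb.
Qed.

Lemma ramsey_lower m n j M a :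
  1 < m -> 3 < n -> a <= m - 2 -> M <= a + (n - 4) + 1 -> ~~ odd a || ~~ odd (n - 4) ->
  ~ ramsey_prop (star m) (treej j n) M.
Proof.
move=> m2 n4 am Mab parity; have [G [sG dG dGc]] := split_graph Mab parity.
exact: (no_ramsey_of_degrees m2 n4 sG (fun x => leq_trans (dG x) am) dGc).
Qed.

Lemma ramsey_prop_succ k1 k2 (G1 : rel 'I_k1) (G2 : rel 'I_k2) N :
  ramsey_prop G1 G2 N -> ramsey_prop G1 G2 N.+1.
Proof.
move=> RN G [irr Gsym].
pose w (x : 'I_N) := widen_ord (leqnSn N) x.
have winj : injective w by move=> x y /(congr1 val) /= /val_inj.
have sG' : simple_graph (fun x y => G (w x) (w y)).
  by split=> [x | x y]; [exact: irr | exact: Gsym].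
case: (RN _ sG') => [h | h]; [left | right]; by apply: contains_map winj _ h.
Qed.

Lemma ramsey_prop_mono k1 k2 (G1 : rel 'I_k1) (G2 : rel 'I_k2) M M' :
  M <= M' -> ramsey_prop G1 G2 M -> ramsey_prop G1 G2 M'.
Proof.
move=> /subnK <- RM; elim: (M' - M) => // d IH.
by rewrite addSn; exact: ramsey_prop_succ.
Qed.

(* By monotonicity, N is the Ramsey number once N works and N - 1 does not. *)
Lemma is_ramsey_numberP k1 k2 (G1 : rel 'I_k1) (G2 : rel 'I_k2) N :
  0 < N -> ramsey_prop G1 G2 N -> ~ ramsey_prop G1 G2 N.-1 -> is_ramsey_number G1 G2 N.
Proof.
move=> N0 RN notR; split=> //; split=> // M _ ltMN RM.
by apply: notR; apply: ramsey_prop_mono RM; rewrite -ltnS prednK.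
Qed.

Theorem theorem6p1 (m n j : nat) :
  5 <= m -> 8 <= n -> m < n -> (j == 1) || (j == 2) ->
  (is_ramsey_number (star m) (treej j n) (m + n - 4) \/
   is_ramsey_number (star m) (treej j n) (m + n - 5)) /\
  (~~ odd (m * n) -> is_ramsey_number (star m) (treej j n) (m + n - 4)).
Proof.
move=> m5 n8 mn _.
have upper := ramsey_upper j m5 (ltnW n8) mn.
have not6 : ~ ramsey_prop (star m) (treej j n) (m + n - 6).
  by apply: (ramsey_lower (a := (m - 2) %/ 2 * 2)); rewrite ?oddM ?andbF //; lia.
have r4 : ~ ramsey_prop (star m) (treej j n) (m + n - 5) ->
    is_ramsey_number (star m) (treej j n) (m + n - 4).
  move=> not5; apply: is_ramsey_numberP => //; first by lia.
  by rewrite (_ : (m + n - 4).-1 = m + n - 5) //; lia.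
split.
  case: (classic (ramsey_prop (star m) (treej j n) (m + n - 5))) => [R5 | notR5].
    right; apply: is_ramsey_numberP => //; first by lia.
    by rewrite (_ : (m + n - 5).-1 = m + n - 6) //; lia.
  by left; exact: r4.
rewrite oddM negb_and => even; apply: r4.
by apply: (ramsey_lower (a := m - 2)); lia.
Qed.
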